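(* Let $V_1,V_2\subset\mathbb R^n\setminus\{0\}$ be finite disjoint sets such that no element of $V_1\cup V_2$ is a positive multiple of another, and suppose $\operatorname{pos}V_1\cap\operatorname{pos}V_2\neq\{0\}$. Then there exist $V_1'\subseteq V_1$ and $V_2'\subseteq V_2$ such that $(\operatorname{pos}V_1'\cap\operatorname{pos}V_2')\setminus\{0\}$ is exactly one open ray from the origin, this ray is contained in the relative interior of both $\operatorname{pos}V_1'$ and $\operatorname{pos}V_2'$, and $V_1'\cup V_2'$ is separated from $0$ (i.e. $0\notin\operatorname{conv}(V_1'\cup V_2')$).
   Context: $\operatorname{pos}A$ denotes the positive hull of $A$, the set of all nonnegative linear combinations of elements of $A$. *)

From HB Require Import structures.
From mathcomp Require Import all_boot all_order all_algebra.
From mathcomp Require Import reals.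
Set Implicit Arguments. Unset Strict Implicit. Unset Printing Implicit Defensive.
Import Order.TTheory GRing.Theory Num.Theory.
Local Open Scope ring_scope.

Section Cones.
Variables (R : realType) (n : nat).
Local Notation V := 'rV[R]_n.

Definition pos (s : seq V) (v : V) : Prop :=
  exists c : V -> R, (forall x, 0 <= c x) /\ v = \sum_(x <- undup s) c x *: x.

Definition conv (s : seq V) (v : V) : Prop :=
  exists c : V -> R, (forall x, 0 <= c x) /\
    \sum_(x <- undup s) c x = 1 /\ v = \sum_(x <- undup s) c x *: x.

Definition aff (C : V -> Prop) (v : V) : Prop :=
  exists (s : seq V) (c : V -> R), (forall x, x \in s -> C x) /\
    \sum_(x <- s) c x = 1 /\ v = \sum_(x <- s) c x *: x.

Definition sqdist (x y : V) : R := \sum_(i < n) ((x - y) 0 i) ^+ 2.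

Definition relint (C : V -> Prop) (x : V) : Prop :=
  C x /\ exists eps : R, 0 < eps /\
    forall y, aff C y -> sqdist y x < eps ^+ 2 -> C y.

End Cones.

From HB Require Import structures.
From mathcomp Require Import all_boot all_order all_algebra.
From mathcomp Require Import reals.
From mathcomp Require Import lra.
From Stdlib Require Import Classical.
Import Order.TTheory GRing.Theory Num.Theory.
Set Implicit Arguments. Unset Strict Implicit.
Local Open Scope ring_scope.

(* Coefficients are functions on the vectors; comb s f is the combination
   sum_(x in s) f x *: x.  A point v <> 0 of pos V1 /\ pos V2 gives a
   balanced configuration (config): disjoint duplicate-free lists s1, s2 and
   weights c > 0 on s1 ++ s2 with comb s1 c = comb s2 c <> 0.  It is rigid
   when every balanced coefficient function is a multiple of c on s1 ++ s2.
   A non-rigid configuration can be shrunk: moving c along a balanced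
   direction not proportional to c until a weight vanishes (a
   Caratheodory-type step) yields a configuration on fewer vectors; so, by
   induction on the size, every configuration contains a rigid one
   (config_rigid).  For a rigid configuration, rigidity alone shows that s1
   and s2 are linearly independent, that the nonzero common points of the
   two hulls form the open ray through d = comb s1 c (rigid_ray) and that
   0 is not a convex combination of s1 ++ s2 (rigid_not_conv).  Finally a
   positive combination of independent vectors is in the relative interior
   of their positive hull, because a left inverse of the matrix of the
   vectors bounds the coefficients linearly in the point (relint_comb). *)

Lemma seq_argmin (T : eqType) (R : realDomainType) (f : T -> R) (s : seq T) :
  s != [::] -> exists2 x, x \in s & {in s, forall y, f x <= f y}.
Proof.
elim: s => // a [|b s] IH _.
  by exists a => [|y]; rewrite ?mem_seq1 // => /eqP->.
have [x xs xmin] := IH isT.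
have [fax|fxa] := leP (f a) (f x).
  exists a => [|y]; first exact: mem_head.
  by rewrite inE => /predU1P[->//|/xmin]; apply: le_trans.
exists x => [|y]; first by rewrite inE xs orbT.
by rewrite inE => /predU1P[->|/xmin//]; apply: ltW.
Qed.

Lemma min_pos (T : eqType) (R : realDomainType) (s : seq T) (a : T -> R) :
  {in s, forall x, 0 < a x} -> exists m, 0 < m /\ {in s, forall x, m <= a x}.
Proof.
have [-> _|s0 a_gt0] := eqVneq s [::]; first by exists 1.
have [x xs xmin] := seq_argmin a s0.
by exists (a x); split; [apply: a_gt0 | apply: xmin].
Qed.

Lemma min_ratio (T : eqType) (R : realFieldType) (s : seq T) (p q : T -> R) :
  {in s, forall x, 0 < p x} -> (exists2 x, x \in s & 0 < q x) ->
  exists t, [/\ 0 < t, {in s, forall x, 0 <= p x - t * q x}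
              & exists2 x, x \in s & p x - t * q x = 0].
Proof.
move=> p_gt0 [x0 x0s qx0_gt0].
have [|x] := seq_argmin (fun x => p x / q x) (s := [seq x <- s | 0 < q x]).
  by rewrite -has_filter; apply/hasP; exists x0.
rewrite mem_filter => /andP[qx_gt0 xs] xmin.
exists (p x / q x); split=> [||]; first by rewrite divr_gt0 ?p_gt0.
  move=> y ys; rewrite subr_ge0; have [qy_gt0|qy_le0] := ltP 0 (q y).
    by rewrite -ler_pdivlMr // xmin // mem_filter qy_gt0.
  have: 0 <= p x / q x by rewrite ltW // divr_gt0 ?p_gt0.
  have := p_gt0 y ys; nra.
by exists x => //; rewrite divfK ?subrr ?gt_eqF.
Qed.

Section Combinations.
Variables (R : realFieldType) (V : lmodType R).
Implicit Types (s : seq V) (f g : V -> R).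

Definition comb s f : V := \sum_(x <- s) f x *: x.

Lemma comb_eq s f g : {in s, f =1 g} -> comb s f = comb s g.
Proof. by move=> fg; apply: eq_big_seq => x /fg->. Qed.

Lemma comb0 s : comb s (fun=> 0) = 0.
Proof. by rewrite /comb big1 // => x _; rewrite scale0r. Qed.

Lemma combD s f g : comb s (fun x => f x + g x) = comb s f + comb s g.
Proof. by rewrite /comb -big_split; apply: eq_bigr => x _; rewrite scalerDl. Qed.

Lemma combB s f g : comb s (fun x => f x - g x) = comb s f - comb s g.
Proof. by rewrite /comb -sumrB; apply: eq_bigr => x _; rewrite scalerBl. Qed.

Lemma combZ s f k : comb s (fun x => k * f x) = k *: comb s f.
Proof. by rewrite /comb scaler_sumr; apply: eq_bigr => x _; rewrite scalerA. Qed.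

Lemma comb_nil f : comb [::] f = 0.
Proof. by rewrite /comb big_nil. Qed.

Definition psupp s f := [seq x <- s | 0 < f x].

Lemma comb_psupp s f : {in s, forall x, 0 <= f x} -> comb (psupp s f) f = comb s f.
Proof.
move=> f_ge0; rewrite /comb big_filter big_mkcond big_seq [RHS]big_seq.
apply: eq_bigr => x xs; case: ltP => // fx_le0.
by rewrite (@le_anti _ _ (f x) 0) ?scale0r ?fx_le0 ?f_ge0.
Qed.

Lemma size_psupp_lt s f : (exists2 x, x \in s & f x = 0) ->
  (size (psupp s f) < size s)%N.
Proof.
move=> [x xs fx0]; rewrite size_filter -(count_predC (fun x => 0 < f x) s).
rewrite -[X in (X < _)%N]addn0 ltn_add2l -has_count.
by apply/hasP; exists x => //=; rewrite fx0 ltxx.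
Qed.

Definition glue s f1 f2 x := if x \in s then f1 x else f2 x.

Lemma comb_glue_l s1 f1 f2 : comb s1 (glue s1 f1 f2) = comb s1 f1.
Proof. by apply: comb_eq => x xs; rewrite /glue xs. Qed.

Lemma comb_glue_r s1 s2 f1 f2 : {in s2, forall x, x \notin s1} ->
  comb s2 (glue s1 f1 f2) = comb s2 f2.
Proof. by move=> dis; apply: comb_eq => x /dis xs1; rewrite /glue (negbTE xs1). Qed.

Definition indep s := forall g, comb s g = 0 -> {in s, forall x, g x = 0}.

Lemma comb_neq0_mem s f : comb s f != 0 -> exists y, y \in s.
Proof. by case: s => [|y s]; [rewrite comb_nil eqxx | exists y; apply: mem_head]. Qed.

Lemma prop_ge0 s f g k : (exists y, y \in s) -> {in s, forall x, 0 < g x} ->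
  {in s, forall x, f x = k * g x} -> {in s, forall x, 0 <= f x} -> 0 <= k.
Proof.
by move=> [y ys] g_gt0 fkg f_ge0; rewrite -(pmulr_lge0 _ (g_gt0 y ys)) -fkg ?f_ge0.
Qed.

Record config s1 s2 c : Prop := Config {
  config_uniq : uniq (s1 ++ s2);
  config_pos : {in s1 ++ s2, forall x, 0 < c x};
  config_bal : comb s1 c = comb s2 c;
  config_neq0 : comb s1 c != 0 }.

Definition rigid s1 s2 c := forall g, comb s1 g = comb s2 g ->
  exists k, {in s1 ++ s2, forall x, g x = k * c x}.

Lemma config_psupp s1 s2 z : uniq (s1 ++ s2) ->
  {in s1 ++ s2, forall x, 0 <= z x} -> comb s1 z = comb s2 z -> comb s1 z != 0 ->
  (exists2 x, x \in s1 ++ s2 & z x = 0) ->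
  config (psupp s1 z) (psupp s2 z) z /\
  (size (psupp s1 z ++ psupp s2 z) < size (s1 ++ s2))%N.
Proof.
move=> u z_ge0 bal nz z0.
have [z1_ge0 z2_ge0] : {in s1, forall x, 0 <= z x} /\ {in s2, forall x, 0 <= z x}.
  by split=> x xs; apply: z_ge0; rewrite mem_cat xs ?orbT.
have catE : psupp s1 z ++ psupp s2 z = psupp (s1 ++ s2) z by rewrite /psupp filter_cat.
split; last by rewrite catE; apply: size_psupp_lt.
split; first by rewrite catE filter_uniq.
- by move=> x; rewrite catE mem_filter => /andP[].
- by rewrite !comb_psupp.
- by rewrite comb_psupp.
Qed.

Lemma nonrigid_witness s1 s2 c : ~ rigid s1 s2 c ->
  exists h, [/\ comb s1 h = comb s2 h,
    forall k, exists2 x, x \in s1 ++ s2 & h x != k * c x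
    & exists2 x, x \in s1 ++ s2 & 0 < h x].
Proof.
move=> nrig; have [g ng] := not_all_ex_not _ _ nrig.
have [bal nprop] := imply_to_and _ _ ng.
have {}nprop k : exists2 x, x \in s1 ++ s2 & g x != k * c x.
  have [x nx] := not_all_ex_not _ _ (not_ex_all_not _ _ nprop k).
  have [xs gx] := imply_to_and _ _ nx.
  by exists x => //; apply/eqP.
have [x xs gx0] := nprop 0; rewrite mul0r in gx0.
have [gx_gt0|gx_le0] := ltP 0 (g x); first by exists g; split=> //; exists x.
exists (fun y => -1 * g y); split.
- by rewrite !combZ bal.
- move=> k; have [y ys gy] := nprop (- k); exists y => //.
  by rewrite mulN1r; apply: contra gy => /eqP e; rewrite mulNr -e opprK.
- by exists x => //; rewrite mulN1r oppr_gt0 lt_neqAle gx0 gx_le0.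
Qed.

(* the shrinking step: with t maximal such that z = c - t h >= 0, either
   comb s1 z <> 0 and z is a smaller configuration, or z is a nonnegative
   nonzero relation of s1 and of s2, and c - t' z (t' maximal) keeps both
   combinations of c while losing a vector *)
Lemma config_shrink s1 s2 c : config s1 s2 c -> ~ rigid s1 s2 c ->
  exists s1' s2' c', [/\ {subset s1' <= s1}, {subset s2' <= s2}, config s1' s2' c'
                       & (size (s1' ++ s2') < size (s1 ++ s2))%N].
Proof.
move=> [u c_gt0 bal nz] /nonrigid_witness[h [hbal hnprop hpos]].
have shrink z : {in s1 ++ s2, forall x, 0 <= z x} -> comb s1 z = comb s2 z ->
    comb s1 z != 0 -> (exists2 x, x \in s1 ++ s2 & z x = 0) ->
    exists s1' s2' c', [/\ {subset s1' <= s1}, {subset s2' <= s2}, config s1' s2' c'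
                         & (size (s1' ++ s2') < size (s1 ++ s2))%N].
  move=> z_ge0 zbal zn0 z0; have [cf lt] := config_psupp u z_ge0 zbal zn0 z0.
  by exists (psupp s1 z), (psupp s2 z), z; split=> // x; rewrite mem_filter => /andP[].
have [t [t_gt0 z_ge0 z0]] := min_ratio c_gt0 hpos.
set z := fun x => c x - t * h x.
have zbal : comb s1 z = comb s2 z by rewrite !combB !combZ bal hbal.
have [zs1|zn0] := eqVneq (comb s1 z) 0; last exact: (shrink z).
have zpos : exists2 x, x \in s1 ++ s2 & 0 < z x.
  have [x xs hx] := hnprop t^-1; exists x => //.
  rewrite lt_def z_ge0 // andbT; apply: contra hx; rewrite subr_eq0 => /eqP->.
  by rewrite mulrA mulVf ?mul1r ?eqxx // gt_eqF.
have [t' [_ c'_ge0 c'0]] := min_ratio c_gt0 zpos.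
apply: shrink c'_ge0 _ _ c'0; rewrite !combB !combZ -?zbal zs1 scaler0 !subr0 //.
Qed.

Lemma config_rigid s1 s2 c : config s1 s2 c ->
  exists s1' s2' c', [/\ {subset s1' <= s1}, {subset s2' <= s2}, config s1' s2' c'
                       & rigid s1' s2' c'].
Proof.
have [N] := ubnP (size (s1 ++ s2)); elim: N s1 s2 c => // N IH s1 s2 c sizeN cf.
have [rig|nrig] := classic (rigid s1 s2 c); first by exists s1, s2, c; split.
have [s1' [s2' [c' [sub1 sub2 cf' lt]]]] := config_shrink cf nrig.
have [s1'' [s2'' [c'' [sub1' sub2' cf'' rig]]]] := IH s1' s2' c' (leq_trans lt sizeN) cf'.
by exists s1'', s2'', c''; split=> // x; [move/sub1'/sub1 | move/sub2'/sub2].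
Qed.

Section Rigid.
Variables (s1 s2 : seq V) (c : V -> R).
Hypotheses (cf : config s1 s2 c) (rig : rigid s1 s2 c).

Lemma config_disjoint : {in s2, forall x, x \notin s1}.
Proof. by case: cf; rewrite cat_uniq => /and3P[_ /hasPn dis _]. Qed.

Lemma config_uniq_l : uniq s1.
Proof. by case: cf; rewrite cat_uniq => /and3P[]. Qed.

Lemma config_uniq_r : uniq s2.
Proof. by case: cf; rewrite cat_uniq => /and3P[]. Qed.

Lemma config_pos_l : {in s1, forall x, 0 < c x}.
Proof. by move=> x xs; apply: (config_pos cf); rewrite mem_cat xs. Qed.

Lemma config_pos_r : {in s2, forall x, 0 < c x}.
Proof. by move=> x xs; apply: (config_pos cf); rewrite mem_cat xs orbT. Qed.

Lemma config_mem_l : exists y, y \in s1.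
Proof. exact: comb_neq0_mem (config_neq0 cf). Qed.

Lemma config_mem_r : exists y, y \in s2.
Proof. by apply: (@comb_neq0_mem _ c); rewrite -(config_bal cf) (config_neq0 cf). Qed.

Lemma rigid_glue f1 f2 : comb s1 f1 = comb s2 f2 ->
  exists k, {in s1, forall x, f1 x = k * c x} /\ {in s2, forall x, f2 x = k * c x}.
Proof.
move=> bal; have [|k gk] := @rig (glue s1 f1 f2).
  by rewrite comb_glue_l comb_glue_r //; apply: config_disjoint.
exists k; split=> x xs; have := gk x; rewrite mem_cat xs ?orbT /glue.
  by rewrite xs => ->.
by rewrite (negbTE (config_disjoint xs)) => ->.
Qed.

(* in a rigid configuration both sides are linearly independent: a
   relation on one side is balanced against the zero function on the other *)
Lemma rigid_indep : indep s1 /\ indep s2.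
Proof.
have [[y1 y1s] [y2 y2s]] := (config_mem_l, config_mem_r).
split=> g g0 x xs.
- have [|k [gk zk]] := @rigid_glue g (fun=> 0); first by rewrite g0 comb0.
  have /esym/eqP := zk y2 y2s; rewrite mulf_eq0 (gt_eqF (config_pos_r y2s)) orbF.
  by move/eqP=> k_eq0; rewrite gk // k_eq0 mul0r.
- have [|k [zk gk]] := @rigid_glue (fun=> 0) g; first by rewrite g0 comb0.
  have /esym/eqP := zk y1 y1s; rewrite mulf_eq0 (gt_eqF (config_pos_l y1s)) orbF.
  by move/eqP=> k_eq0; rewrite gk // k_eq0 mul0r.
Qed.

End Rigid.

End Combinations.

Section PositiveHulls.
Variables (R : realType) (n : nat).
Implicit Types (s : seq 'rV[R]_n) (v : 'rV[R]_n) (f g : 'rV[R]_n -> R).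

Lemma posE s v : uniq s ->
  pos s v <-> exists2 f, {in s, forall x, 0 <= f x} & v = comb s f.
Proof.
move=> us; rewrite /pos undup_id //; split=> [[f [f_ge0 ->]]|[f f_ge0 ->]].
  by exists f.
exists (glue s f (fun=> 0)); split; last exact/esym/comb_glue_l.
by move=> x; rewrite /glue; case: ifP => // /f_ge0.
Qed.

(* a nonzero common point of pos V1 and pos V2 gives a configuration: keep
   the vectors with positive coefficients *)
Lemma config_of_pos V1 V2 v : {in V1, forall x, x \notin V2} ->
  v != 0 -> pos V1 v -> pos V2 v ->
  exists s1 s2 c, [/\ {subset s1 <= V1}, {subset s2 <= V2} & config s1 s2 c].
Proof.
move=> dis v0 [c1 [c1_ge0 e1]] [c2 [c2_ge0 e2]].
have {}e1 : comb (undup V1) c1 = v := esym e1.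
have {}e2 : comb (undup V2) c2 = v := esym e2.
set s1 := psupp (undup V1) c1; set s2 := psupp (undup V2) c2.
have sub1 : {subset s1 <= V1} by move=> x; rewrite mem_filter mem_undup => /andP[].
have sub2 : {subset s2 <= V2} by move=> x; rewrite mem_filter mem_undup => /andP[].
have dis2 : {in s2, forall x, x \notin s1}.
  by move=> x /sub2 xV2; apply: contraTN xV2 => /sub1; apply: dis.
exists s1, s2, (glue s1 c1 c2); split => //; split.
- by rewrite cat_uniq !filter_uniq ?undup_uniq // andbT; apply/hasPn.
- move=> x; rewrite mem_cat /glue => /orP[xs1|xs2].
    by rewrite xs1; move: xs1; rewrite mem_filter => /andP[].
  by rewrite (negbTE (dis2 x xs2)); move: xs2; rewrite mem_filter => /andP[].
- by rewrite comb_glue_l comb_glue_r // !comb_psupp // e1 e2.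
- by rewrite comb_glue_l comb_psupp // e1.
Qed.

Lemma rigid_ray s1 s2 c : config s1 s2 c -> rigid s1 s2 c -> forall v,
  (pos s1 v /\ pos s2 v /\ v != 0) <-> exists t, 0 < t /\ v = t *: comb s1 c.
Proof.
move=> cf rig v; have u1 := config_uniq_l cf; have u2 := config_uniq_r cf.
split=> [[/(posE _ u1)[f1 f1_ge0 ->] [/(posE _ u2)[f2 _ bal] v0]]|[t [t_gt0 ->]]].
  have [k [f1k _]] := rigid_glue cf rig bal.
  have ev : comb s1 f1 = k *: comb s1 c by rewrite -combZ; apply: comb_eq.
  have k_ge0 : 0 <= k := prop_ge0 (config_mem_l cf) (config_pos_l cf) f1k f1_ge0.
  exists k; split=> //; rewrite lt_def k_ge0 andbT; apply: contraNneq v0 => k0.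
  by rewrite ev k0 scale0r.
have tc_ge0 s : {in s, forall x, 0 < c x} -> {in s, forall x, 0 <= t * c x}.
  by move=> c_gt0 x /c_gt0 cx; rewrite mulr_ge0 ?ltW.
split; [|split].
- apply/(posE _ u1); exists (fun x => t * c x); last by rewrite combZ.
  exact: tc_ge0 (config_pos_l cf).
- apply/(posE _ u2); exists (fun x => t * c x); last by rewrite combZ (config_bal cf).
  exact: tc_ge0 (config_pos_r cf).
- by rewrite scaler_eq0 negb_or gt_eqF ?(config_neq0 cf).
Qed.

(* a convex combination of s1 ++ s2 equal to 0 would be a balanced pair
   (f on s1, -f on s2), hence proportional to c with a factor both >= 0
   and <= 0, hence zero *)
Lemma rigid_not_conv s1 s2 c : config s1 s2 c -> rigid s1 s2 c -> ~ conv (s1 ++ s2) 0.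
Proof.
move=> cf rig [f [f_ge0 [f1 f0]]]; rewrite undup_id ?(config_uniq cf) // in f1 f0.
have bal : comb s1 f = comb s2 (fun x => -1 * f x).
  by rewrite combZ scaleN1r; apply/eqP; rewrite -addr_eq0 /comb -big_cat -f0 eqxx.
have [k [fk nfk]] := rigid_glue cf rig bal.
have k_ge0 : 0 <= k.
  exact: prop_ge0 (config_mem_l cf) (config_pos_l cf) fk (fun x _ => f_ge0 x).
have k_le0 : 0 <= - k.
  apply: prop_ge0 (config_mem_r cf) (config_pos_r cf) _ (fun x _ => f_ge0 x) => x xs.
  by rewrite mulNr -(nfk x xs) mulN1r opprK.
have k0 : k = 0 by lra.
have f_eq0 : {in s1 ++ s2, forall x, f x = 0}.
  move=> x; rewrite mem_cat => /orP[xs|xs]; first by rewrite fk // k0 mul0r.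
  by apply/eqP; rewrite -oppr_eq0 -mulN1r nfk // k0 mul0r.
by move: f1; rewrite big_seq big1 // => /eqP; rewrite eq_sym oner_eq0.
Qed.

Lemma aff_pos_comb s y : uniq s -> aff (pos s) y -> exists g, y = comb s g.
Proof.
move=> us [l [a [lpos [_ ->]]]]; elim: l lpos => [|x l IH] lpos.
  by exists (fun=> 0); rewrite big_nil comb0.
have [|g gE] := IH; first by move=> z zl; apply: lpos; rewrite inE zl orbT.
have [f _ fE] := (posE _ us).1 (lpos x (mem_head x l)).
by exists (fun z => a x * f z + g z); rewrite big_cons gE fE combD combZ.
Qed.

Definition rowsmx s : 'M[R]_(size s, n) := \matrix_(i, j) s`_i 0 j.

Lemma comb_rowsmx s g : comb s g = \row_i g s`_i *m rowsmx s.
Proof.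
rewrite mulmx_sum_row /comb (big_nth 0) big_mkord; apply: eq_bigr => i _.
by rewrite mxE; congr (_ *: _); apply/rowP => j; rewrite !mxE.
Qed.

Lemma indep_row_free s : uniq s -> indep s -> row_free (rowsmx s).
Proof.
move=> us ind; apply: inj_row_free => r r0; apply/rowP => i.
pose g x := \sum_(j < size s | s`_j == x) r 0 j.
have gE (j : 'I_(size s)) : g s`_j = r 0 j.
  by rewrite /g (eq_bigl (pred1 j)) ?big_pred1_eq // => j'; rewrite nth_uniq.
have : comb s g = 0.
  by rewrite comb_rowsmx -[RHS]r0; congr (_ *m _); apply/rowP => j; rewrite mxE gE.
by move/ind/(_ _ (mem_nth 0 (ltn_ord i))); rewrite gE mxE.
Qed.

(* the coefficients of a combination of independent vectors are bounded
   linearly by the size of the combination (via a left inverse P) *)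
Lemma coef_bound s : uniq s -> indep s -> exists2 K, 0 < K &
  forall g e, 0 <= e -> sqdist (comb s g) 0 < e ^+ 2 ->
  {in s, forall x, `|g x| <= K * e}.
Proof.
move=> us ind; have /row_freeP[P MP] := indep_row_free us ind.
pose K := 1 + \sum_(i < size s) \sum_(j < n) `|P j i|.
have K_gt0 : 0 < K by rewrite ltr_pwDl // sumr_ge0 // => i _; rewrite sumr_ge0.
exists K => // g e e_ge0 small x xs.
set d := comb s g.
have d_le j : `|d 0 j| <= e.
  have : d 0 j ^+ 2 < e ^+ 2.
    apply: le_lt_trans small; rewrite /sqdist subr0 (bigD1 j) //= lerDl.
    by rewrite sumr_ge0 // => i _; apply: sqr_ge0.
  by move=> h; rewrite ler_norml; apply/andP; split; nra.
have ix : (index x s < size s)%N by rewrite index_mem.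
have rE : \row_i g s`_i = d *m P by rewrite /d comb_rowsmx -mulmxA MP mulmx1.
move/rowP: rE => /(_ (Ordinal ix)); rewrite !mxE /= nth_index // => ->.
apply: le_trans (ler_norm_sum _ _ _) _.
apply: le_trans (_ : \sum_j e * `|P j (Ordinal ix)| <= _).
  by apply: ler_sum => j _; rewrite normrM ler_wpM2r.
rewrite -mulr_sumr mulrC ler_wpM2r // /K (bigD1 (Ordinal ix)) //=.
have : 0 <= \sum_(i < size s | i != Ordinal ix) \sum_(j < n) `|P j i|.
  by rewrite sumr_ge0 // => i _; rewrite sumr_ge0.
lra.
Qed.

(* a positive combination of independent vectors lies in the relative
   interior of their positive hull: nearby points of the affine hull have
   coefficients within min a of those of the given point *)
Lemma relint_comb s a : uniq s -> indep s -> {in s, forall x, 0 < a x} ->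
  relint (pos s) (comb s a).
Proof.
move=> us ind a_gt0; split.
  by apply/(posE _ us); exists a => // x /a_gt0/ltW.
have [K K_gt0 bound] := coef_bound us ind.
have [m [m_gt0 am]] := min_pos a_gt0.
exists (m / K); split=> [|y /(aff_pos_comb us)[g ->] close]; first exact: divr_gt0.
apply/(posE _ us); exists g => // x xs.
have small : sqdist (comb s (fun x => g x - a x)) 0 < (m / K) ^+ 2.
  by rewrite combB /sqdist subr0; apply: close.
have := bound _ _ (ltW (divr_gt0 m_gt0 K_gt0)) small x xs.
rewrite mulrC divfK ?gt_eqF // ler_norml => /andP[+ _].
by have := am x xs; lra.
Qed.

End PositiveHulls.

Theorem lemma2p1 (R : realType) (n : nat) (V1 V2 : seq 'rV[R]_n) :
  (0 \notin V1) -> (0 \notin V2) ->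
  (forall x, x \in V1 -> x \notin V2) ->
  (forall u v, u \in V1 ++ V2 -> v \in V1 ++ V2 ->
     forall t : R, 0 < t -> u = t *: v -> u = v) ->
  (exists v, v != 0 /\ pos V1 v /\ pos V2 v) ->
  exists V1' V2' : seq 'rV[R]_n,
    {subset V1' <= V1} /\ {subset V2' <= V2} /\
    (exists d : 'rV[R]_n, d != 0 /\
       (forall v, (pos V1' v /\ pos V2' v /\ v != 0) <->
                  (exists t : R, 0 < t /\ v = t *: d)) /\
       (forall t : R, 0 < t ->
          relint (pos V1') (t *: d) /\ relint (pos V2') (t *: d))) /\
    ~ conv (V1' ++ V2') 0.
Proof.
move=> _ _ dis _ [v [v0 [vV1 vV2]]].
have [s1 [s2 [c [sub1 sub2 cf]]]] := config_of_pos dis v0 vV1 vV2.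
have [s1' [s2' [c' [sub1' sub2' cf' rig]]]] := config_rigid cf.
have [ind1 ind2] := rigid_indep cf' rig.
exists s1', s2'; split; first by move=> x /sub1'/sub1.
split; first by move=> x /sub2'/sub2.
split; last exact: rigid_not_conv cf' rig.
exists (comb s1' c'); split; first exact: config_neq0 cf'.
split; first exact: rigid_ray cf' rig.
move=> t t_gt0; split.
  rewrite -combZ; apply: relint_comb (config_uniq_l cf') ind1 _ => x /(config_pos_l cf').
  exact: mulr_gt0.
rewrite (config_bal cf') -combZ.
apply: relint_comb (config_uniq_r cf') ind2 _ => x /(config_pos_r cf').
exact: mulr_gt0.
Qed.
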